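(* Let $\succeq$ be a complete and transitive preference relation on $\mathcal{L}$ that is continuous with respect to convergence in probability, satisfies state-wise monotonicity, and is regret based. Then (i) $\succeq$ is monotonic with respect to first-order stochastic dominance: for $X,Y\in\mathcal{L}$, if $F_X$ strictly dominates $F_Y$ by first-order stochastic dominance (i.e., $F_X(t)\leqslant F_Y(t)$ for all $t$ and $F_X\neq F_Y$), then $X\succ Y$; and (ii) $\succeq$ is continuous with respect to convergence in distribution: whenever $X^k,X,Y\in\mathcal{L}$ and $X^k\to X$ in distribution, $X^k\succeq Y$ for all $k$ implies $X\succeq Y$, and $Y\succeq X^k$ for all $k$ implies $Y\succeq X$.
   Context: Fix a bounded interval of outcomes $[\underline x,\bar x]\subset\mathbb{R}$. Let $(S,\Sigma,\mathrm{P})$ be the probability space with $S=[0,1]$, $\Sigma$ the Borel $\sigma$-algebra on $[0,1]$, and $\mathrm{P}$ Lebesgue measure. $\mathcal{L}$ is the set of measurable random variables $X:S\to[\underline x,\bar x]$ taking only finitely many values; such $X$ is written $X=(x_1,S_1;\ldots;x_n,S_n)$, meaning $X=x_i$ on the event $S_i$, where $S_1,\ldots,S_n$ is a measurable partition of $S$. $F_X$ denotes the cdf of $X$. A preference relation $\succeq$ on $\mathcal{L}$ is a binary relation; $\succ$ and $\sim$ are its strict and indifference parts. A regret function is a continuous $\psi:[\underline x,\bar x]\times[\underline x,\bar x]\to\mathbb{R}$ with $\psi(x,x)=0$ for all $x$, $\psi(x,y)$ strictly increasing in $x$ and strictly decreasing in $y$. For $X=(x_1,S_1;\ldots;x_n,S_n)$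 and $Y=(y_1,S_1;\ldots;y_n,S_n)$ written on a common partition, the regret lottery is the finite-support lottery $\Psi(X,Y)=(\psi(x_1,y_1),p_1;\ldots;\psi(x_n,y_n),p_n)$ with $p_i=\mathrm{P}(S_i)$ (i.e., the distribution of $s\mapsto\psi(X(s),Y(s))$). The relation $\succeq$ is regret based if there exist a regret function $\psi$ and a continuous real-valued functional $V$ defined on the set of regret lotteries $\{\Psi(X,Y):X,Y\in\mathcal{L}\}$ such that for all $X,Y\in\mathcal{L}$: $X\succeq Y$ iff $V(\Psi(X,Y))\geqslant 0$. A sequence $X^k\in\mathcal{L}$ converges in probability to $X\in\mathcal{L}$ if for every $\varepsilon>0$, $\lim_{k\to\infty}\mathrm{P}(|X^k-X|\geqslant\varepsilon)=0$. $\succeq$ is continuous with respect to convergence in probability if, whenever $X^k\to X$ in probability: $X^k\succeq Y$ for all $k$ implies $X\succeq Y$, and $Y\succeq X^k$ for all $k$ implies $Y\succeq X$. $X^k$ converges in distribution to $X$ if $\lim_{k\to\infty}F_{X^k}(x)=F_X(x)$ at every $x$ at which $F_X$ is continuous. $\succeq$ satisfies state-wise monotonicity if for any measurable partition $S_1,\ldots,S_n$ of $S$ and any $X=(x_1,S_1;\ldots;x_n,S_n)$, $Y=(y_1,S_1;\ldots;y_n,S_n)$ with $x_i\geqslant y_i$ for all $i$ and at least one strict inequality, $X\succ Y$. *)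

From HB Require Import structures.
From mathcomp Require Import all_boot all_order all_algebra.
From mathcomp Require Import all_classical all_reals all_analysis.
Set Implicit Arguments. Unset Strict Implicit. Unset Printing Implicit Defensive.
Import Order.TTheory GRing.Theory Num.Theory.
Import numFieldNormedType.Exports.
Local Open Scope classical_set_scope.
Local Open Scope ring_scope.

Section RegretDefs.
Variable R : realType.

(* The state space S = [0,1]; random variables are functions R -> R of which
   only the restriction to S matters. *)
Definition Sst : set R := `[0%R, 1%R].

Definition Prob (A : set R) : R := fine (lebesgue_measure (Sst `&` A)).

Definition inL (xl xh : R) (X : R -> R) : Prop :=
  [/\ measurable_fun Sst X,
      (forall s, Sst s -> xl <= X s <= xh) &
      finite_set (X @` Sst)].

Definition cdf (X : R -> R) (t : R) : R := Prob [set s | X s <= t].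

Definition weak_cvg (G : nat -> R -> R) (G0 : R -> R) : Prop :=
  forall t, {for t, continuous G0} -> (fun k => G k t) @ \oo --> G0 t.

Definition cvg_in_distribution (Xk : nat -> R -> R) (X : R -> R) : Prop :=
  weak_cvg (fun k => cdf (Xk k)) (cdf X).

Definition cvg_in_probability (Xk : nat -> R -> R) (X : R -> R) : Prop :=
  forall eps : R, 0 < eps ->
    (fun k => Prob [set s | eps <= `|Xk k s - X s|]) @ \oo --> 0.

Definition strict_pref (pref : (R -> R) -> (R -> R) -> Prop) X Y : Prop :=
  pref X Y /\ ~ pref Y X.

Definition complete_pref xl xh (pref : (R -> R) -> (R -> R) -> Prop) : Prop :=
  forall X Y, inL xl xh X -> inL xl xh Y -> pref X Y \/ pref Y X.

Definition transitive_pref xl xh (pref : (R -> R) -> (R -> R) -> Prop) : Prop :=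
  forall X Y Z, inL xl xh X -> inL xl xh Y -> inL xl xh Z ->
    pref X Y -> pref Y Z -> pref X Z.

Definition continuous_in_probability xl xh
    (pref : (R -> R) -> (R -> R) -> Prop) : Prop :=
  forall (Xk : nat -> R -> R) X Y,
    (forall k, inL xl xh (Xk k)) -> inL xl xh X -> inL xl xh Y ->
    cvg_in_probability Xk X ->
    ((forall k, pref (Xk k) Y) -> pref X Y) /\
    ((forall k, pref Y (Xk k)) -> pref Y X).

Definition continuous_in_distribution xl xh
    (pref : (R -> R) -> (R -> R) -> Prop) : Prop :=
  forall (Xk : nat -> R -> R) X Y,
    (forall k, inL xl xh (Xk k)) -> inL xl xh X -> inL xl xh Y ->
    cvg_in_distribution Xk X ->
    ((forall k, pref (Xk k) Y) -> pref X Y) /\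
    ((forall k, pref Y (Xk k)) -> pref Y X).

Definition meas_partition n (Sp : 'I_n -> set R) : Prop :=
  [/\ (forall i, measurable (Sp i)),
      (forall i, Sp i `<=` Sst),
      (forall i j, i != j -> Sp i `&` Sp j = set0) &
      (forall s, Sst s -> exists i, Sp i s)].

Definition statewise_monotone xl xh (pref : (R -> R) -> (R -> R) -> Prop) : Prop :=
  forall n (Sp : 'I_n -> set R) (x y : 'I_n -> R) X Y,
    meas_partition Sp -> inL xl xh X -> inL xl xh Y ->
    (forall i s, Sp i s -> X s = x i /\ Y s = y i) ->
    (forall i, y i <= x i) ->
    (exists i, y i < x i /\ 0 < Prob (Sp i)) ->
    strict_pref pref X Y.

Definition interval_set (xl xh : R) : set R := [set x | xl <= x <= xh].

Definition regret_function (xl xh : R) (psi : R -> R -> R) : Prop :=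
  [/\ {within [set p : R * R | interval_set xl xh p.1 /\ interval_set xl xh p.2],
        continuous (fun p : R * R => psi p.1 p.2)},
      (forall x, interval_set xl xh x -> psi x x = 0),
      (forall x x' y, interval_set xl xh x -> interval_set xl xh x' ->
         interval_set xl xh y -> x < x' -> psi x y < psi x' y) &
      (forall x y y', interval_set xl xh x -> interval_set xl xh y ->
         interval_set xl xh y' -> y < y' -> psi x y' < psi x y)].

(* The regret lottery Psi(X,Y): the distribution of s |-> psi(X s, Y s),
   represented by its cdf. *)
Definition regret_lottery (psi : R -> R -> R) (X Y : R -> R) : R -> R :=
  cdf (fun s => psi (X s) (Y s)).

(* V is a continuous functional on the set of regret lotteries, endowed with
   the topology of weak convergence (sequential continuity; this topology is
   metrizable on distributions with bounded support). *)
Definition continuous_on_regret_lotteries xl xh (psi : R -> R -> R)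
    (V : (R -> R) -> R) : Prop :=
  forall (Xk Yk : nat -> R -> R) X Y,
    (forall k, inL xl xh (Xk k)) -> (forall k, inL xl xh (Yk k)) ->
    inL xl xh X -> inL xl xh Y ->
    weak_cvg (fun k => regret_lottery psi (Xk k) (Yk k)) (regret_lottery psi X Y) ->
    (fun k => V (regret_lottery psi (Xk k) (Yk k))) @ \oo -->
      V (regret_lottery psi X Y).

Definition regret_based xl xh (pref : (R -> R) -> (R -> R) -> Prop) : Prop :=
  exists (psi : R -> R -> R) (V : (R -> R) -> R),
    [/\ regret_function xl xh psi,
        continuous_on_regret_lotteries xl xh psi V &
        forall X Y, inL xl xh X -> inL xl xh Y ->
          (pref X Y <-> 0 <= V (regret_lottery psi X Y))].

Definition strict_fosd (X Y : R -> R) : Prop :=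
  (forall t, cdf X t <= cdf Y t) /\ cdf X <> cdf Y.

End RegretDefs.

(* If X and Y take the values a, b on a set A and b, a on a set B of the same
   measure, and agree elsewhere, then s |-> h (X s) (Y s) and
   s |-> h (Y s) (X s) are equally distributed for every h.  In particular the
   regret lotteries Psi(X, Y) and Psi(Y, X) coincide, so a complete
   regret-based preference is indifferent between X and Y.  Finitely many such
   exchanges (a selection sort on the finitely many values of X) turn any X in
   L into an indifferent, equally distributed Z that is nondecreasing on
   S = [0, 1], i.e. into the quantile function of F_X.
   (i) If F_X <= F_Y, the quantile functions satisfy Z_X >= Z_Y except at the
   finitely many states s = F_X (Z_X s); so Z_Y is indifferent to
   min(Z_X, Z_Y) <= Z_X, with strict inequality on a set of positive measure
   when F_X <> F_Y, and state-wise monotonicity gives X > Y.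
   (ii) For quantile functions of finitely-valued variables, convergence in
   distribution implies convergence in probability, so continuity in
   probability carries over. *)

From Pilot Require Import Defs.
From HB Require Import structures.
From mathcomp Require Import all_boot all_order all_algebra.
From mathcomp Require Import all_classical all_reals all_analysis.
From mathcomp Require Import lra.
Import Order.TTheory GRing.Theory Num.Theory.
Import numFieldNormedType.Exports.
Local Open Scope classical_set_scope.
Local Open Scope ring_scope.
Set Implicit Arguments. Unset Strict Implicit. Unset Printing Implicit Defensive.
(* mathcomp-analysis exports its own [cdf], for random variables. *)
Local Notation cdf := Defs.cdf.

(** * Lebesgue measure on S and finitely-valued variables *)

Section LebesgueOnS.
Variable R : realType.
Local Notation mu := (@lebesgue_measure R).
Local Notation S := (@Sst R).

(* [fine] sends an infinite measure to 0: [lam] is only used on subsets of S. *)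
Definition lam (A : set R) : R := fine (mu A).

Lemma cdfE (X : R -> R) t : cdf X t = lam (S `&` [set s | X s <= t]).
Proof. by []. Qed.

Lemma measurable_S : measurable S. Proof. exact: measurable_itv. Qed.

Lemma lamE A : measurable A -> A `<=` S -> mu A = (lam A)%:E.
Proof.
move=> mA AS; rewrite /lam fineK// ge0_fin_numE//.
have muS : mu S = 1%:E.
  by rewrite /Sst lebesgue_measure_itv /= lte_fin ltr01 -EFinB subr0.
have AS' : (mu A <= mu S)%E by rewrite le_measure ?inE//; exact: measurable_S.
by rewrite (le_lt_trans AS') // muS ltry.
Qed.

Lemma lam_ge0 A : 0 <= lam A.
Proof. by rewrite /lam fine_ge0. Qed.

Lemma le_lam A B : measurable A -> measurable B -> B `<=` S -> A `<=` B ->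
  lam A <= lam B.
Proof.
move=> mA mB BS AB; rewrite -lee_fin -!lamE//; last exact: subset_trans BS.
by rewrite le_measure ?inE.
Qed.

Lemma lam_setU A B : measurable A -> measurable B -> A `<=` S -> B `<=` S ->
  A `&` B = set0 -> lam (A `|` B) = lam A + lam B.
Proof.
move=> mA mB AS BS AB; apply: EFin_inj; rewrite EFinD -!lamE ?measureU//.
  exact: measurableU.
by move=> x [/AS|/BS].
Qed.

Lemma lam_setU_le A B : measurable A -> measurable B -> A `<=` S -> B `<=` S ->
  lam (A `|` B) <= lam A + lam B.
Proof.
move=> mA mB AS BS; rewrite -lee_fin EFinD -!lamE ?measureU2//.
  exact: measurableU.
by move=> x [/AS|/BS].
Qed.

Lemma lamID A B : measurable A -> measurable B -> A `<=` S ->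
  lam A = lam (A `&` B) + lam (A `\` B).
Proof.
move=> mA mB AS; rewrite -lam_setU ?setUIDK//.
- exact: measurableI.
- exact: measurableD.
- by move=> x [/AS].
- by move=> x [/AS].
- by rewrite setDE setIACA setICr setI0.
Qed.

Lemma lam_finite_set A : finite_set A -> lam A = 0.
Proof.
by move=> /finite_set_countable/countable_lebesgue_measure0; rewrite /lam => ->.
Qed.

Lemma lam_sub_itv A x y : measurable A -> A `<=` S -> A `<=` `[x, y] ->
  lam A <= `|y - x|.
Proof.
move=> mA AS Axy; rewrite -lee_fin -lamE//.
have AI : (mu A <= mu `[x, y])%E by rewrite le_measure ?inE//; exact: measurable_itv.
rewrite (le_trans AI)// lebesgue_measure_itv /= lte_fin; case: ltP => //= _.
by rewrite lee_fin ler_norm.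
Qed.

Lemma lam_S_itv x : 0 <= x <= 1 -> lam (S `&` `]-oo, x]) = x.
Proof.
move=> /andP[x0 x1].
have -> : S `&` `]-oo, x] = [set` `[0, x]].
  apply/seteqP; split => s; rewrite /Sst /= !in_itv /= ?andbT.
    by move=> [/andP[-> _] ->].
  by move=> /andP[-> sx]; rewrite sx (le_trans sx x1).
rewrite /lam lebesgue_measure_itv /= lte_fin.
by case: ltP => //= h; [rewrite subr0 | apply/eqP; rewrite eq_le x0 h].
Qed.

Lemma lam_eq_off_null A B N : measurable A -> measurable B -> measurable N ->
  A `<=` S -> B `<=` S -> lam (S `&` N) = 0 -> A `\` N = B `\` N ->
  lam A = lam B.
Proof.
move=> mA mB mN AS BS N0 AB.
suff lamD C : measurable C -> C `<=` S -> lam C = lam (C `\` N).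
  by rewrite (lamD A) ?(lamD B) ?AB.
move=> mC CS; rewrite (lamID mC mN CS) -[RHS]add0r; congr (_ + _).
apply/eqP; rewrite eq_le lam_ge0 andbT -N0; apply: le_lam.
- exact: measurableI.
- by apply: measurableI => //; exact: measurable_S.
- exact: subIsetl.
- by move=> s [/CS].
Qed.

Section Fibers.
Variables (T : eqType) (f : R -> T).

Lemma setI_fibers_cons a (l : seq T) (P : set R) :
  S `&` [set s | f s \in a :: l /\ P s] =
  (S `&` [set s | f s = a /\ P s]) `|` (S `&` [set s | f s \in l /\ P s]).
Proof.
apply/seteqP; split => s.
  by move=> [Ss [] ]; rewrite in_cons => /orP[/eqP|] fs Ps; [left|right].
by move=> [] [Ss [fs Ps]]; split => //; split => //; rewrite in_cons ?fs ?eqxx ?orbT.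
Qed.

Lemma setI_fibers_nil (P : set R) :
  S `&` [set s | f s \in ([::] : seq T) /\ P s] = set0.
Proof. by apply/seteqP; split => // s [_ []]. Qed.

Lemma setI_values (l : seq T) (P : set R) : (forall s, S s -> f s \in l) ->
  S `&` [set s | f s \in l /\ P s] = S `&` P.
Proof.
move=> fl; apply/seteqP; split => s [Ss Ps]; split => //.
- by case: Ps.
- by split => //; exact: fl.
Qed.

Variable P : set R.
Hypothesis measurable_fiber : forall a, measurable (S `&` [set s | f s = a /\ P s]).

Lemma measurable_fibers (l : seq T) : measurable (S `&` [set s | f s \in l /\ P s]).
Proof.
elim: l => [|a l IH]; first by rewrite setI_fibers_nil.
by rewrite setI_fibers_cons; exact: measurableU.
Qed.

Lemma lam_fibers_le (l : seq T) : lam (S `&` [set s | f s \in l /\ P s]) <=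
  \sum_(a <- l) lam (S `&` [set s | f s = a /\ P s]).
Proof.
elim: l => [|a l IH]; first by rewrite setI_fibers_nil big_nil /lam measure0.
have mA := measurable_fiber a; have mB := measurable_fibers l.
rewrite setI_fibers_cons big_cons.
by rewrite (le_trans (lam_setU_le mA mB (@subIsetl _ _ _) (@subIsetl _ _ _))) ?lerD2l.
Qed.

Lemma lam_null_fibers (l : seq T) : (forall s, S s -> f s \in l) ->
  (forall a, a \in l -> lam (S `&` [set s | f s = a /\ P s]) = 0) ->
  lam (S `&` P) = 0.
Proof.
move=> fl null; rewrite -(setI_values _ fl); apply/eqP; rewrite eq_le lam_ge0 andbT.
by apply: (le_trans (lam_fibers_le l)); rewrite big_seq big1.
Qed.

End Fibers.

Definition simple (X : R -> R) (l : seq R) :=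
  measurable_fun S X /\ forall s, S s -> X s \in l.

Lemma finite_set_measurable (A : set R) : finite_set A -> measurable A.
Proof.
move=> /finite_set_countable; apply: countable_measurable => t.
exact: measurable_set1.
Qed.

Lemma measurable_simple_preimage X l B : simple X l ->
  measurable (S `&` X @^-1` B).
Proof.
move=> [mX Xl]; have -> : S `&` X @^-1` B = S `&` X @^-1` (B `&` [set` l]).
  apply/seteqP; split => s [Ss Es]; split => //.
  - by split => //; exact: Xl.
  - by case: Es.
apply: mX; first exact: measurable_S.
by apply: finite_set_measurable; apply: finite_setIr.
Qed.

Lemma measurable_simple_le X l t : simple X l ->
  measurable (S `&` [set s | X s <= t]).
Proof. exact: (@measurable_simple_preimage X l [set x | x <= t]). Qed.

Lemma measurable_simple_rel X Y lX lY (P : R -> R -> Prop) :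
  simple X lX -> simple Y lY -> measurable (S `&` [set s | P (X s) (Y s)]).
Proof.
move=> sX sY; rewrite -(setI_values _ sX.2); apply: measurable_fibers => a.
have -> : S `&` [set s | X s = a /\ P (X s) (Y s)] =
    (S `&` X @^-1` [set a]) `&` (S `&` Y @^-1` [set y | P a y]).
  apply/seteqP; split => s.
    by move=> [Ss [Xa]]; rewrite Xa.
  by move=> [[Ss /= Xa] [_ /=]]; rewrite Xa.
by apply: measurableI;
  [exact: measurable_simple_preimage sX | exact: measurable_simple_preimage sY].
Qed.

Lemma simple_fibers Y l : (forall s, S s -> Y s \in l) ->
  (forall a, measurable (S `&` Y @^-1` [set a])) -> simple Y l.
Proof.
move=> Yl mY; split => // _ B mB.
rewrite -(setI_values _ Yl); apply: measurable_fibers => a.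
have [Ba|nBa] := pselect (B a).
  rewrite [X in measurable X](_ : _ = S `&` Y @^-1` [set a])//.
  by apply/seteqP; split => s [Ss] => [[]|/= ->].
rewrite [X in measurable X](_ : _ = set0)//.
by apply/seteqP; split => // s [_ [/= -> ]].
Qed.

Lemma simple_comp2 (h : R -> R -> R) X Y lX lY : simple X lX -> simple Y lY ->
  simple (fun s => h (X s) (Y s)) [seq h a b | a <- lX, b <- lY].
Proof.
move=> sX sY; apply: simple_fibers => [s Ss|a].
  by apply/allpairsP; exists (X s, Y s); rewrite sX.2 ?sY.2.
exact: (measurable_simple_rel (fun x y => h x y = a) sX sY).
Qed.

Lemma inL_simple xl xh X : inL xl xh X ->
  exists l, simple X l /\ forall a, a \in l -> xl <= a <= xh.
Proof.
move=> [mX Xb /finite_seqP[l Xl]]; exists l; split; first split => //.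
  by move=> s Ss; have : [set` l] (X s) by rewrite -Xl; exists s.
move=> a al; have : (X @` S) a by rewrite Xl.
by move=> [s Ss <-]; exact: Xb.
Qed.

Lemma simple_inL xl xh Y l : simple Y l ->
  (forall s, S s -> xl <= Y s <= xh) -> inL xl xh Y.
Proof.
move=> [mY Yl] Yb; split => //.
by apply: (@sub_finite_set _ _ [set` l]) (finite_seq l) => _ [s Ss <-]; exact: Yl.
Qed.

Lemma cdf_eq_off_null X Y lX lY N : simple X lX -> simple Y lY ->
  measurable N -> lam (S `&` N) = 0 ->
  (forall s, S s -> ~ N s -> X s = Y s) -> cdf X = cdf Y.
Proof.
move=> sX sY mN N0 XY; apply/funext => r; rewrite !cdfE.
have mX : measurable (S `&` [set s | X s <= r]) by exact: measurable_simple_le sX.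
have mY : measurable (S `&` [set s | Y s <= r]) by exact: measurable_simple_le sY.
apply: (lam_eq_off_null mX mY mN (@subIsetl _ _ _) (@subIsetl _ _ _) N0).
apply/seteqP; split => s [[Ss /= XYr] Ns]; do 2 split => //=.
- by rewrite -(XY s Ss Ns).
- by rewrite (XY s Ss Ns).
Qed.

End LebesgueOnS.

(** * Exchangeable pairs *)

Section Exchangeable.
Variable R : realType.
Local Notation S := (@Sst R).

Definition exchangeable (X Y : R -> R) := forall h : R -> R -> R,
  cdf (fun s => h (X s) (Y s)) = cdf (fun s => h (Y s) (X s)).

Lemma exchangeable_cdf X Y : exchangeable X Y -> cdf X = cdf Y.
Proof. by move=> XY; exact: XY (fun x _ => x). Qed.

Lemma exchangeable_off_null X Y lX lY N : simple X lX -> simple Y lY ->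
  measurable N -> lam (S `&` N) = 0 ->
  (forall s, S s -> ~ N s -> X s = Y s) -> exchangeable X Y.
Proof.
move=> sX sY mN N0 XY h.
apply: (cdf_eq_off_null (simple_comp2 h sX sY) (simple_comp2 h sY sX) mN N0).
by move=> s Ss Ns; rewrite XY.
Qed.

Section Swap.
Variables (X Y : R -> R) (lX : seq R) (A B : set R) (a b : R).
Hypotheses (sX : simple X lX) (mA : measurable A) (mB : measurable B).
Hypotheses (AS : A `<=` S) (BS : B `<=` S).
Hypothesis YX : forall s, S s -> ~ A s -> ~ B s -> Y s = X s.
Hypothesis XYA : forall s, A s -> X s = a /\ Y s = b.
Hypothesis XYB : forall s, B s -> X s = b /\ Y s = a.

Let U (h : R -> R -> R) r := (S `&` X @^-1` [set x | h x x <= r]) `\` (A `|` B).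

Let level_set_swap (h : R -> R -> R) r :
  S `&` [set s | h (X s) (Y s) <= r] =
  U h r `|` (if h a b <= r then A else set0) `|` (if h b a <= r then B else set0).
Proof.
apply/seteqP; split => s.
  move=> [Ss /= hr]; have [As|nAs] := pselect (A s).
    by have [Xa Yb] := XYA As; rewrite Xa Yb in hr; rewrite hr; left; right.
  have [Bs|nBs] := pselect (B s).
    by have [Xb Ya] := XYB Bs; rewrite Xb Ya in hr; rewrite hr; right.
  by rewrite (YX Ss nAs nBs) in hr; left; left; split => // -[].
move=> [[[[Ss /= hr] nAB]|]|].
- by split => //=; rewrite YX // => ?; apply: nAB; [left|right].
- case: ifP => // hab As; have [Xa Yb] := XYA As.
  by split; [exact: AS | rewrite /= Xa Yb].
- case: ifP => // hba Bs; have [Xb Ya] := XYB Bs.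
  by split; [exact: BS | rewrite /= Xb Ya].
Qed.

Lemma exchangeable_swap : lam A = lam B -> exchangeable X Y.
Proof.
move=> lamAB h; apply/funext => r; rewrite !cdfE.
rewrite (level_set_swap h) (level_set_swap (fun x y => h y x)).
have -> : U (fun x y => h y x) r = U h r by [].
have mU : measurable (U h r).
  apply: measurableD; [exact: measurable_simple_preimage sX | exact: measurableU].
have US : U h r `<=` S by move=> s [[]].
have UA : U h r `&` A = set0 by apply/seteqP; split => // s [[_ /not_orP[]]].
have UB : U h r `&` B = set0 by apply/seteqP; split => // s [[_ /not_orP[]]].
by case: (h a b <= r); case: (h b a <= r); rewrite ?setU0 // !lam_setU // lamAB.
Qed.

End Swap.

Section Exchange.
Variables (X : R -> R) (l : seq R) (v w : R).

Let Cv := S `&` X @^-1` [set v].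
Let Cw := S `&` X @^-1` [set w].
Let g x := lam ((Cv `|` Cw) `&` `]-oo, x]).

(* The v-states right of the threshold and the w-states left of it have the
   same measure (lemma lamAB below); taking the infimum puts the threshold
   before every upper bound of the v-states. *)
Definition exchange_threshold := inf [set x | 0 <= x /\ lam Cv <= g x].

Local Notation t := exchange_threshold.

Definition exchange s :=
  if (X s == v) || (X s == w) then (if s <= t then v else w) else X s.

Lemma exchange_other s : X s != v -> X s != w -> exchange s = X s.
Proof. by rewrite /exchange => /negbTE-> /negbTE->. Qed.

Lemma exchange_cells s : X s = v \/ X s = w ->
  (exchange s = v /\ s <= t) \/ (exchange s = w /\ t < s).
Proof.
rewrite /exchange => vw_s.
have -> : (X s == v) || (X s == w) by case: vw_s => ->; rewrite eqxx ?orbT.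
by case: leP => st; [left|right].
Qed.

Hypotheses (sX : simple X l) (vw : v < w).

Let mCv : measurable Cv. Proof. exact: measurable_simple_preimage sX. Qed.
Let mCw : measurable Cw. Proof. exact: measurable_simple_preimage sX. Qed.
Let CvS : Cv `<=` S. Proof. exact: subIsetl. Qed.
Let CwS : Cw `<=` S. Proof. exact: subIsetl. Qed.
Let CvCw : Cv `&` Cw = set0.
Proof.
by apply/seteqP; split => // s [[_ /= Xv] [_ /= Xw]]; move: vw; rewrite -Xv Xw ltxx.
Qed.
Let mD x : measurable ((Cv `|` Cw) `&` `]-oo, x]).
Proof. by apply: measurableI; [exact: measurableU | exact: measurable_itv]. Qed.
Let DS x : (Cv `|` Cw) `&` `]-oo, x] `<=` S.
Proof. by move=> s [[/CvS|/CwS]]. Qed.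

Let g_lipschitz x y : x <= y -> g y <= g x + (y - x).
Proof.
move=> xy; rewrite /g (lamID _ (measurable_itv `]-oo, x]) (@DS y))//.
rewrite -setIA (@setIidr _ `]-oo, y]); last first.
  by move=> s; rewrite /= !in_itv /= => sx; exact: le_trans sx xy.
have yx0 : 0 <= y - x by rewrite subr_ge0.
rewrite lerD2l -(ger0_norm yx0) lam_sub_itv//.
- by apply: measurableD => //; exact: measurable_itv.
- by move=> s [/DS].
- move=> s [[_ /=]]; rewrite !in_itv /= => sy /negP; rewrite -ltNge => xs.
  by rewrite (ltW xs) sy.
Qed.

Let g0 : g 0 = 0.
Proof.
apply: lam_finite_set; apply: (sub_finite_set _ (finite_set1 0)) => s.
move=> Ds; have := DS Ds; case: Ds => _.
rewrite /Sst /= !in_itv /= => s0' /andP[s0 _].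
by apply/eqP; rewrite eq_le s0 s0'.
Qed.

Let T := [set x | 0 <= x /\ lam Cv <= g x].

Let T_upper s' : S s' -> (forall s, S s -> X s = v -> s <= s') -> T s'.
Proof.
move=> Ss' Cv_le; split; first by move: Ss'; rewrite /Sst /= in_itv => /andP[].
apply: le_lam => // s Cvs; split; first by left.
by rewrite /= in_itv /=; case: Cvs => Ss Xv; exact: Cv_le.
Qed.

Let T1 : T 1.
Proof.
apply: T_upper => [|s]; first by rewrite /Sst /= in_itv /= ler01 lexx.
by rewrite /Sst /= in_itv /= => /andP[_ s1].
Qed.

Let T_lbound : has_lbound T. Proof. by exists 0 => x []. Qed.

Let t_ge0 : 0 <= t.
Proof. by apply: lb_le_inf; [exists 1; exact: T1 | move=> x []]. Qed.

Let g_threshold : g t = lam Cv.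
Proof.
apply/eqP; rewrite eq_le; apply/andP; split; apply/ler_addgt0Pr => e e0.
  have [t0|tpos] := eqVneq t 0; first by rewrite t0 g0 addr_ge0 ?lam_ge0 ?ltW.
  have {}tpos : 0 < t by rewrite lt_neqAle eq_sym tpos t_ge0.
  pose x := t - Num.min e t / 2.
  have me : Num.min e t <= e by rewrite ge_min lexx.
  have mt : Num.min e t <= t by rewrite ge_min lexx orbT.
  have m0 : 0 < Num.min e t by rewrite lt_min e0 tpos.
  have xt : x < t by rewrite /x; lra.
  have nTx : ~ T x by move=> /(ge_inf T_lbound); rewrite leNgt xt.
  have gx : g x < lam Cv.
    by rewrite ltNge; apply/negP => gx; apply: nTx; split => //; rewrite /x; lra.
  have := g_lipschitz (ltW xt); rewrite /x; lra.
have [x [x0 px] xt] := inf_adherent e0 (conj (ex_intro _ 1 T1) T_lbound).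
have tx : t <= x by apply: ge_inf => //; split.
rewrite (le_trans px)// (le_trans (g_lipschitz tx))// lerD2l lerBlDl ltW//.
Qed.

Lemma exchange_threshold_le s' : S s' ->
  (forall s, S s -> X s = v -> s <= s') -> t <= s'.
Proof. by move=> Ss' Cv_le; apply: (ge_inf T_lbound); exact: T_upper. Qed.

Lemma simple_exchange : simple exchange [:: v, w & l].
Proof.
apply: simple_fibers => [s Ss|a].
  rewrite /exchange; case: ifP => _; first by case: ifP; rewrite !in_cons eqxx ?orbT.
  by rewrite !in_cons sX.2 ?orbT.
pose k x b := if (x == v) || (x == w) then (if b then v else w) else x.
have -> : S `&` exchange @^-1` [set a] =
    (S `&` X @^-1` [set x | k x true = a] `&` `]-oo, t]) `|`
    (S `&` X @^-1` [set x | k x false = a] `\` `]-oo, t]).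
  apply/seteqP; split => s.
    move=> [Ss /=]; rewrite /exchange; case: (boolP (s <= t)) => st ea.
      by left; split => //=; rewrite in_itv /= st.
    by right; split => //=; rewrite in_itv /= (negbTE st).
  move=> [[[Ss /= ea]]|[[Ss /= ea]]]; rewrite /= in_itv /= => st; split => //=.
    by rewrite /exchange st.
  by move/negP/negbTE: st; rewrite /exchange => ->.
apply: measurableU; [apply: measurableI | apply: measurableD];
  by [exact: measurable_simple_preimage sX | exact: measurable_itv].
Qed.

Lemma exchange_inL xl xh : inL xl xh X -> xl <= v <= xh -> xl <= w <= xh ->
  inL xl xh exchange.
Proof.
move=> [_ Xb _] vb wb; apply: simple_inL simple_exchange _ => s Ss.
by rewrite /exchange; case: ifP => _; [case: ifP | exact: Xb].
Qed.

Let A := Cv `\` `]-oo, t].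
Let B := Cw `&` `]-oo, t].
Let mI : measurable `]-oo, t]. Proof. exact: measurable_itv. Qed.
Let mA : measurable A. Proof. exact: measurableD. Qed.
Let mB : measurable B. Proof. exact: measurableI. Qed.
Let AS : A `<=` S. Proof. by move=> s [/CvS]. Qed.
Let BS : B `<=` S. Proof. by move=> s [/CwS]. Qed.

Let lamAB : lam A = lam B.
Proof.
have hA : lam Cv = lam (Cv `&` `]-oo, t]) + lam A by exact: lamID.
have mCvI : measurable (Cv `&` `]-oo, t]) by exact: measurableI.
have hB : g t = lam (Cv `&` `]-oo, t]) + lam B.
  rewrite /g setIUl; apply: lam_setU => //.
  - by move=> s [/CvS].
  - by rewrite setIACA CvCw set0I.
by move: hA hB; rewrite g_threshold; lra.
Qed.

Lemma exchangeable_exchange : exchangeable X exchange.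
Proof.
apply: (@exchangeable_swap X exchange l A B v w sX mA mB AS BS);
  last exact: lamAB.
- move=> s Ss nA nB; rewrite /exchange.
  case: ifPn => // /orP[] /eqP Xs; case: ifPn => st.
  + by rewrite Xs.
  + by exfalso; apply: nA; split; [by [] | rewrite /= in_itv /=; apply/negP].
  + by exfalso; apply: nB; split; [by [] | rewrite /= in_itv /= st].
  + by rewrite Xs.
- move=> s [[Ss /= Xv]]; rewrite /= in_itv /= => /negP/negbTE st.
  by rewrite /exchange Xv eqxx st.
- move=> s [[Ss /= Xw]]; rewrite /= in_itv /= => st.
  by rewrite /exchange Xw eqxx orbT st.
Qed.

End Exchange.

End Exchangeable.

Section Counting.
Variable R : realType.

Lemma exists_next_gt (l : seq R) (c : R) : has (fun x => c < x) l ->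
  exists v, [/\ v \in l, c < v & forall x, x \in l -> c < x -> v <= x].
Proof.
elim: l => [//|a l IH] /=; case: (ltP c a) => ca /=; last first.
  move=> /IH[v [vl cv vmin]]; exists v; split; rewrite ?in_cons ?vl ?orbT //.
  move=> x; rewrite in_cons => /orP[/eqP ->|]; last exact: vmin.
  by move=> ac; have := lt_le_trans ac ca; rewrite ltxx.
case: (boolP (has (fun x => c < x) l)) => [/IH[v [vl cv vmin]]|hl] _.
  have [av|va] := leP a v.
    exists a; split; rewrite ?in_cons ?eqxx // => x.
    by rewrite in_cons => /orP[/eqP ->//|xl cx]; exact: le_trans av (vmin x xl cx).
  exists v; split; rewrite ?in_cons ?vl ?orbT // => x.
  by rewrite in_cons => /orP[/eqP -> _|]; [exact: ltW | exact: vmin].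
exists a; split; rewrite ?in_cons ?eqxx // => x.
rewrite in_cons => /orP[/eqP ->//|xl cx].
by move/hasPn: hl => /(_ x xl); rewrite cx.
Qed.

Lemma count_gt_le (l : seq R) (c d : R) : c <= d ->
  (count (fun x => (d < x)%R) l <= count (fun x => (c < x)%R) l)%N.
Proof. by move=> cd; apply: sub_count => x /= /(le_lt_trans cd). Qed.

Lemma count_gt_lt (l : seq R) (c d : R) : c < d -> d \in l ->
  (count (fun x => (d < x)%R) l < count (fun x => (c < x)%R) l)%N.
Proof.
move=> cd; elim: l => //= a l IH; rewrite in_cons => /orP[/eqP da|dl].
  by rewrite -da ltxx cd add0n add1n ltnS count_gt_le // ltW.
rewrite -addnS; apply: leq_add; last exact: IH.
by case: (ltP d a) => // da; rewrite (lt_trans cd da).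
Qed.

End Counting.

(** * Nondecreasing rearrangements *)

Section Rearrangement.
Variables (R : realType) (xl xh : R) (E : (R -> R) -> (R -> R) -> Prop).
Local Notation S := (@Sst R).
Local Notation inL := (inL xl xh).
Hypothesis E_trans :
  forall X Y Z, inL X -> inL Y -> inL Z -> E X Y -> E Y Z -> E X Z.
Hypothesis E_exchangeable :
  forall X Y, inL X -> inL Y -> exchangeable X Y -> E X Y.

Definition nondecreasing_on_S (Z : R -> R) :=
  forall s s', S s -> S s' -> s <= s' -> Z s <= Z s'.

Section Sorting.
Variables (X0 : R -> R) (l0 : seq R).
Hypothesis iX0 : inL X0.
Hypothesis l0_bounded : forall a, a \in l0 -> xl <= a <= xh.

Definition rearrangement (X : R -> R) :=
  [/\ inL X, (forall s, S s -> X s \in l0), cdf X = cdf X0 & E X0 X].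

(* Selection sort: the states with values <= c are already in place, and the
   next value v is moved in front of the values in (v, d], one value w > d
   at a time. *)
Definition sorted_upto (c : R) (X : R -> R) :=
  forall s s', S s -> S s' -> X s <= c -> X s < X s' -> s <= s'.

Definition front_upto (v d : R) (X : R -> R) :=
  forall s s', S s -> S s' -> X s = v -> v < X s' -> X s' <= d -> s <= s'.

Local Notation n_above c := (count (fun x => c < x) l0).

Lemma le_of_n_above0 c X : n_above c = 0%N -> rearrangement X ->
  forall s, S s -> X s <= c.
Proof.
move=> c0 [_ Xl _ _] s Ss; have : ~~ has (fun x => c < x) l0 by rewrite has_count c0.
by move=> /hasPn/(_ _ (Xl s Ss)); rewrite -leNgt.
Qed.

Section Insert.
Variables (c v : R).
Hypotheses (cv : c < v) (vl0 : v \in l0).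
Hypothesis v_next : forall x, x \in l0 -> c < x -> v <= x.

Section Step.
Variables (d w : R) (X : R -> R).
Hypotheses (vd : v <= d) (dw : d < w) (wl0 : w \in l0).
Hypothesis w_next : forall x, x \in l0 -> d < x -> w <= x.
Hypotheses (GX : rearrangement X) (SX : sorted_upto c X) (FX : front_upto v d X).

Local Notation Y := (exchange X v w).
Let vw : v < w. Proof. exact: le_lt_trans vd dw. Qed.
Let sX : simple X l0. Proof. by case: GX => -[mX _ _] Xl _ _; split. Qed.
Let Xl : forall s, S s -> X s \in l0. Proof. by case: GX. Qed.

Let cells s : (X s = v \/ X s = w) \/ (X s != v /\ X s != w).
Proof.
have [Xv|nv] := eqVneq (X s) v; first by left; left.
by have [Xw|nw] := eqVneq (X s) w; [left; right | right].
Qed.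

Lemma rearrangement_exchange : rearrangement Y.
Proof.
case: GX => iX _ cX EX.
have iY : inL Y := exchange_inL sX iX (l0_bounded vl0) (l0_bounded wl0).
have XY := exchangeable_exchange sX vw.
split => //.
- move=> s Ss; have [/exchange_cells|[nv nw]] := cells s.
    by case=> -[-> _].
  by rewrite exchange_other // Xl.
- by rewrite -(exchangeable_cdf XY).
- exact: E_trans iX0 iX iY EX (E_exchangeable iX iY XY).
Qed.

Lemma sorted_upto_exchange : sorted_upto c Y.
Proof.
have cw : c < w by exact: lt_trans cv vw.
move=> s s' Ss Ss'; have [/exchange_cells|[nv nw]] := cells s.
  by case=> -[-> _]; rewrite leNgt ?cv ?cw.
rewrite exchange_other // => Xsc lt.
apply: SX => //; have [vw_s'|[nv' nw']] := cells s'.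
  by apply: le_lt_trans Xsc _; case: vw_s' => ->.
by rewrite exchange_other in lt.
Qed.

Lemma front_upto_exchange : front_upto v w Y.
Proof.
move=> s s' Ss Ss' Ysv vY Yw.
have st : s <= exchange_threshold X v w.
  have [/exchange_cells|[nv nw]] := cells s.
    by case=> -[Ys st] //; exfalso; move: vw; rewrite -Ysv Ys ltxx.
  have := exchange_other nv nw; rewrite Ysv => Xs.
  by move: nv; rewrite -Xs eqxx.
have [/exchange_cells|[nv' nw']] := cells s'.
  case=> -[Ys' st']; first by move: vY; rewrite Ys' ltxx.
  exact: le_trans st (ltW st').
rewrite exchange_other // in vY Yw.
have Xs'd : X s' <= d.
  rewrite leNgt; apply/negP => /(w_next (Xl Ss')) wX.
  by move/eqP: nw'; apply; apply/eqP; rewrite eq_le Yw wX.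
apply: le_trans st (exchange_threshold_le w sX Ss' _) => s'' Ss'' Xs''.
exact: FX.
Qed.

End Step.

Lemma sorted_upto_front d X : n_above d = 0%N -> rearrangement X ->
  sorted_upto c X -> front_upto v d X -> sorted_upto v X.
Proof.
move=> d0 GX SX FX s s' Ss Ss' Xsv lt.
have [Xsc|cXs] := leP (X s) c; first exact: SX Xsc lt.
have Xs : X s = v by apply/eqP; rewrite eq_le Xsv v_next //; case: GX => _ ->.
by apply: (FX _ _ Ss Ss' Xs) (le_of_n_above0 d0 GX Ss'); rewrite -Xs.
Qed.

Lemma sorted_upto_next n : forall d X, (n_above d <= n)%N ->
  rearrangement X -> sorted_upto c X -> front_upto v d X -> v <= d ->
  exists Y, rearrangement Y /\ sorted_upto v Y.
Proof.
elim: n => [|n IH] d X hd GX SX FX vd.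
  move: hd; rewrite leqn0 => /eqP d0.
  by exists X; split => //; exact: sorted_upto_front FX.
have [d0|dpos] := eqVneq (n_above d) 0%N.
  by exists X; split => //; exact: sorted_upto_front FX.
have [w [wl0 dw w_next]] : exists w, [/\ w \in l0, d < w &
    forall x, x \in l0 -> d < x -> w <= x].
  by apply: exists_next_gt; rewrite has_count lt0n.
apply: (IH w (exchange X v w)).
- by rewrite -ltnS (leq_trans _ hd) //; exact: count_gt_lt.
- exact: rearrangement_exchange vd dw wl0 GX.
- exact: sorted_upto_exchange vd dw SX.
- exact: front_upto_exchange vd dw w_next GX FX.
- exact: le_trans vd (ltW dw).
Qed.

End Insert.

Lemma nondecreasing_sorted_upto c X : n_above c = 0%N -> rearrangement X ->
  sorted_upto c X -> nondecreasing_on_S X.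
Proof.
move=> c0 GX SX s s' Ss Ss' ss'; rewrite leNgt; apply/negP => lt.
have s's := SX s' s Ss' Ss (le_of_n_above0 c0 GX Ss') lt.
have ss : s = s' by apply/eqP; rewrite eq_le ss' s's.
by move: lt; rewrite ss ltxx.
Qed.

Lemma sorted_rearrangement n : forall c X, (n_above c <= n)%N ->
  rearrangement X -> sorted_upto c X ->
  exists Y, rearrangement Y /\ nondecreasing_on_S Y.
Proof.
elim: n => [|n IH] c X hc GX SX.
  move: hc; rewrite leqn0 => /eqP c0.
  by exists X; split => //; exact: nondecreasing_sorted_upto SX.
have [c0|cpos] := eqVneq (n_above c) 0%N.
  by exists X; split => //; exact: nondecreasing_sorted_upto SX.
have [v [vl0 cv v_next]] : exists v, [/\ v \in l0, c < v &
    forall x, x \in l0 -> c < x -> v <= x].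
  by apply: exists_next_gt; rewrite has_count lt0n.
have FX : front_upto v v X.
  by move=> s s' _ _ _ vX Xv; have := lt_le_trans vX Xv; rewrite ltxx.
have [Y [GY SY]] := sorted_upto_next cv vl0 v_next (leqnn _) GX SX FX (lexx v).
apply: (IH v Y) => //.
by rewrite -ltnS (leq_trans _ hc) //; exact: count_gt_lt.
Qed.

End Sorting.

Theorem nondecreasing_rearrangement X : inL X ->
  exists Z, [/\ inL Z, cdf Z = cdf X, E X Z & nondecreasing_on_S Z].
Proof.
move=> iX; have [l [sX lb]] := inL_simple iX.
have GX : rearrangement X l X.
  split => //; first exact: sX.2.
  by apply: E_exchangeable.
have SX : sorted_upto (xl - 1) X.
  move=> s s' Ss _ Xs _; have [_ /(_ s Ss) /andP[xX _] _] := iX.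
  by move: Xs; rewrite leNgt (lt_le_trans _ xX) // ltrBlDr ltrDl.
have [Z [[iZ _ cZ EZ] mono]] := sorted_rearrangement iX lb (leqnn _) GX SX.
by exists Z.
Qed.

End Rearrangement.

(** * Quantile functions *)

Section Quantiles.
Variable R : realType.
Local Notation S := (@Sst R).

Section NondecreasingCdf.
Variables (Z : R -> R) (l : seq R).
Hypotheses (sZ : simple Z l) (mZ : nondecreasing_on_S Z).

Lemma nondecreasing_cdf_ge t s : S s -> Z s <= t -> s <= cdf Z t.
Proof.
move=> Ss Zt; have s01 : 0 <= s <= 1 by move: Ss; rewrite /Sst /= in_itv.
rewrite cdfE -{1}(lam_S_itv s01); apply: le_lam.
- by apply: measurableI; [exact: measurable_S | exact: measurable_itv].
- exact: measurable_simple_le sZ.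
- exact: subIsetl.
- move=> s' [Ss' /=]; rewrite in_itv /= => s's; split => //=.
  exact: le_trans (mZ Ss' Ss s's) Zt.
Qed.

Lemma nondecreasing_cdf_le t s : S s -> t < Z s -> cdf Z t <= s.
Proof.
move=> Ss tZ; have /andP[s0 _] : 0 <= s <= 1 by move: Ss; rewrite /Sst /= in_itv.
rewrite cdfE -[leRHS](ger0_norm s0) -[X in `|X|](subr0 s).
apply: lam_sub_itv; [exact: measurable_simple_le sZ | exact: subIsetl |].
move=> s' [Ss' /= Zs't]; rewrite in_itv /=; apply/andP; split.
  by move: Ss'; rewrite /Sst /= in_itv => /andP[].
rewrite leNgt; apply/negP => ss'.
by move: (lt_le_trans tZ (mZ Ss Ss' (ltW ss'))); rewrite ltNge Zs't.
Qed.

End NondecreasingCdf.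

Lemma fosd_finite_gap Z1 Z2 l1 l2 : simple Z1 l1 -> simple Z2 l2 ->
  nondecreasing_on_S Z1 -> nondecreasing_on_S Z2 ->
  (forall t, cdf Z1 t <= cdf Z2 t) ->
  finite_set [set s | S s /\ Z1 s < Z2 s].
Proof.
move=> s1 s2 m1 m2 fosd.
apply: (@sub_finite_set _ _ (cdf Z1 @` (Z1 @` S))); last first.
  apply/finite_image/(sub_finite_set _ (finite_seq l1)) => _ [s Ss <-].
  exact: s1.2.
move=> s [Ss lt]; exists (Z1 s); first by exists s.
apply/eqP; rewrite eq_le (nondecreasing_cdf_ge s1 m1 Ss (lexx _)) andbT.
exact: le_trans (fosd _) (nondecreasing_cdf_le s2 m2 Ss lt).
Qed.

Lemma meas_partition_fibers (T : eqType) (x0 : T) (f : R -> T) (l : seq T) :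
  uniq l -> (forall s, S s -> f s \in l) ->
  (forall a, measurable (S `&` f @^-1` [set a])) ->
  meas_partition (fun i : 'I_(size l) => S `&` f @^-1` [set nth x0 l i]).
Proof.
move=> ul fl mf; split.
- by move=> i; exact: mf.
- by move=> i s [].
- move=> i j ij; apply/seteqP; split => // s [[_ /= fi] [_ /= fj]].
  move/negP: ij; apply; apply/eqP/val_inj => /=.
  by apply/eqP; rewrite -(nth_uniq x0 (ltn_ord i) (ltn_ord j) ul) -fi -fj.
- move=> s Ss; have fs := fl s Ss; rewrite -index_mem in fs.
  by exists (Ordinal fs); split => //=; rewrite nth_index // fl.
Qed.

End Quantiles.

(** * Regret-based preferences *)

Section Preferences.
Variables (R : realType) (xl xh : R) (pref : (R -> R) -> (R -> R) -> Prop).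
Local Notation S := (@Sst R).
Local Notation inL := (inL xl xh).
Hypotheses (Hcomp : complete_pref xl xh pref) (Htrans : transitive_pref xl xh pref).
Hypothesis Hregret : regret_based xl xh pref.

Definition indiff X Y := pref X Y /\ pref Y X.

Lemma indiff_trans X Y Z : inL X -> inL Y -> inL Z ->
  indiff X Y -> indiff Y Z -> indiff X Z.
Proof.
move=> iX iY iZ [XY YX] [YZ ZY]; split.
- exact: Htrans iX iY iZ XY YZ.
- exact: Htrans iZ iY iX ZY YX.
Qed.

Lemma exchangeable_indiff X Y : inL X -> inL Y -> exchangeable X Y -> indiff X Y.
Proof.
move=> iX iY XY; have [psi [V [_ _ rep]]] := Hregret.
have Psi_sym : regret_lottery psi X Y = regret_lottery psi Y X := XY psi.
case: (Hcomp iX iY) => H; split => //.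
- by apply/(rep _ _ iY iX); rewrite -Psi_sym; apply/(rep _ _ iX iY).
- by apply/(rep _ _ iX iY); rewrite Psi_sym; apply/(rep _ _ iY iX).
Qed.

Lemma strict_pref_indiff X X' Y Y' : inL X -> inL X' -> inL Y -> inL Y' ->
  indiff X X' -> indiff Y Y' -> strict_pref pref X' Y' -> strict_pref pref X Y.
Proof.
move=> iX iX' iY iY' [XX' X'X] [YY' Y'Y] [X'Y' nY'X']; split.
- exact: Htrans iX iX' iY XX' (Htrans iX' iY' iY X'Y' Y'Y).
- by move=> YX; apply: nY'X'; exact: Htrans iY' iY iX' Y'Y (Htrans iY iX iX' YX XX').
Qed.

Lemma indiff_rearrangement X : inL X ->
  exists Z, [/\ inL Z, cdf Z = cdf X, indiff X Z & nondecreasing_on_S Z].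
Proof. exact: nondecreasing_rearrangement indiff_trans exchangeable_indiff X. Qed.

Hypothesis Hsm : statewise_monotone xl xh pref.

Lemma strict_pref_pointwise Z1 Z2 : inL Z1 -> inL Z2 ->
  (forall s, S s -> Z2 s <= Z1 s) -> 0 < lam (S `&` [set s | Z2 s < Z1 s]) ->
  strict_pref pref Z1 Z2.
Proof.
move=> i1 i2 le21 pos.
have [l1 [s1 _]] := inL_simple i1; have [l2 [s2 _]] := inL_simple i2.
pose f s := (Z1 s, Z2 s).
(* Only pairs with p.2 <= p.1, as the empty cells must satisfy y i <= x i too. *)
pose lp := undup [seq p <- [seq (a, b) | a <- l1, b <- l2] | p.2 <= p.1].
have flp s : S s -> f s \in lp.
  move=> Ss; rewrite mem_undup mem_filter /= le21 //=.
  by apply/allpairsP; exists (Z1 s, Z2 s); rewrite s1.2 ?s2.2.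
have mf p : measurable (S `&` f @^-1` [set p]).
  exact: (measurable_simple_rel (fun a b => (a, b) = p) s1 s2).
pose q (i : 'I_(size lp)) := nth (0, 0) lp i.
apply: (Hsm (Sp := fun i => S `&` f @^-1` [set q i])
  (x := fun i => (q i).1) (y := fun i => (q i).2)) => //.
- exact: meas_partition_fibers (undup_uniq _) flp mf.
- by move=> i s [_ /= <-].
- move=> i; have : q i \in lp by rewrite mem_nth.
  by rewrite mem_undup mem_filter => /andP[].
apply: contrapT => none.
suff null : lam (S `&` [set s | Z2 s < Z1 s]) = 0 by move: pos; rewrite null ltxx.
have mfib p : measurable (S `&` [set s | f s = p /\ Z2 s < Z1 s]).
  exact: (measurable_simple_rel (fun a b => (a, b) = p /\ b < a) s1 s2).
apply: (lam_null_fibers mfib flp) => p plp; apply/eqP.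
rewrite eq_le lam_ge0 andbT.
have [lt|nlt] := ltP p.2 p.1; last first.
  rewrite [X in lam X](_ : _ = set0) ?/lam ?measure0 //.
  by apply/seteqP; split => // s [_ [fp lt']]; move: nlt; rewrite -fp /= leNgt lt'.
have hi : (index p lp < size lp)%N by rewrite index_mem.
have qi : q (Ordinal hi) = p by rewrite /q nth_index.
have P0 : ~~ (0 < lam (S `&` (S `&` f @^-1` [set p]))).
  by apply/negP => P0; apply: none; exists (Ordinal hi); rewrite qi.
rewrite -leNgt setIA setIid in P0; apply: le_trans P0.
by apply: le_lam; [exact: mfib | exact: mf | exact: subIsetl | move=> s [Ss []]].
Qed.

Lemma fosd_strict_pref X Y : inL X -> inL Y -> strict_fosd X Y ->
  strict_pref pref X Y.
Proof.
move=> iX iY [fosd cdf_neq].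
have [Z1 [i1 c1 XZ1 m1]] := indiff_rearrangement iX.
have [Z2 [i2 c2 YZ2 m2]] := indiff_rearrangement iY.
have [l1 [s1 _]] := inL_simple i1; have [l2 [s2 _]] := inL_simple i2.
pose Y2 s := Num.min (Z1 s) (Z2 s).
have sY2 : simple Y2 _ := simple_comp2 Num.min s1 s2.
have iY2 : inL Y2.
  apply: simple_inL sY2 _ => s Ss; have [_ B1 _] := i1; have [_ B2 _] := i2.
  rewrite /Y2 le_min ge_min; move/andP: (B1 s Ss) => [-> ->].
  by move/andP: (B2 s Ss) => [-> _].
have Y2_le s : Y2 s <= Z1 s by rewrite /Y2 ge_min lexx.
have fosdZ t : cdf Z1 t <= cdf Z2 t by rewrite c1 c2.
have gap := fosd_finite_gap s1 s2 m1 m2 fosdZ.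
have Z2Y2 : exchangeable Z2 Y2.
  apply: (exchangeable_off_null s2 sY2 (finite_set_measurable gap)).
    exact: lam_finite_set (finite_setIr _ gap).
  move=> s Ss gap_s; rewrite /Y2 min_r // leNgt; apply/negP => lt.
  exact: gap_s.
have gap_pos : 0 < lam (S `&` [set s | Y2 s < Z1 s]).
  rewrite lt_neqAle lam_ge0 andbT; apply/negP => /eqP N0; apply: cdf_neq.
  rewrite -c1 -c2 (exchangeable_cdf Z2Y2).
  apply: (cdf_eq_off_null s1 sY2 (measurable_simple_rel (fun a b => b < a) s1 sY2)).
    by rewrite setIA setIid.
  move=> s Ss nlt; apply/eqP; rewrite eq_le Y2_le andbT leNgt; apply/negP => lt.
  exact: nlt.
apply: (strict_pref_indiff iX i1 iY iY2 XZ1 _ (strict_pref_pointwise i1 iY2 _ gap_pos)).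
- exact: indiff_trans iY i2 iY2 YZ2 (exchangeable_indiff i2 iY2 Z2Y2).
- by move=> s _; exact: Y2_le.
Qed.

End Preferences.

(** * Convergence in distribution *)

Section ConvergenceInProbability.
Variable R : realType.
Local Notation S := (@Sst R).

Lemma exists_pos_notin (D : seq R) (e : R) : 0 < e ->
  exists eta, [/\ 0 < eta, eta <= e & eta \notin D].
Proof.
elim: D e => [|d D IH] e e0; first by exists e; split.
have [d0|d0] := leP d 0.
  have [eta [eta0 etae etaD]] := IH e e0; exists eta; split => //.
  rewrite in_cons negb_or etaD andbT; apply/eqP => ed.
  by move: eta0; rewrite ed ltNge d0.
have m0 : 0 < Num.min e (d / 2) by rewrite lt_min e0 divr_gt0.
have [eta [eta0 etam etaD]] := IH _ m0; exists eta; split => //.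
  by rewrite (le_trans etam) // ge_min lexx.
rewrite in_cons negb_or etaD andbT; apply/eqP => ed.
have : eta <= d / 2 by rewrite (le_trans etam) // ge_min lexx orbT.
by rewrite ed; lra.
Qed.

Lemma exists_dist_gt0 (l : seq R) (t : R) : t \notin l ->
  exists2 d, 0 < d & forall a, a \in l -> d <= `|a - t|.
Proof.
elim: l => [|a l IH]; first by exists 1.
rewrite in_cons negb_or => /andP[ta /IH[d d0 hd]].
have at0 : 0 < `|a - t| by rewrite normr_gt0 subr_eq0 eq_sym.
exists (Num.min d `|a - t|); first by rewrite lt_min d0 at0.
move=> b; rewrite in_cons => /orP[/eqP ->|bl]; first by rewrite ge_min lexx orbT.
by rewrite ge_min hd.
Qed.

Lemma cdf_continuous_notin (Z : R -> R) (l : seq R) (t : R) :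
  simple Z l -> t \notin l ->
  {for t, continuous (cdf Z)}.
Proof.
move=> sZ /exists_dist_gt0[d d0 hd]; apply: (near_cst_continuous (cdf Z t)).
apply/nbhs_ballP; exists d => // y; rewrite /ball /= ltr_norml => /andP[ty1 ty2].
rewrite !cdfE; congr lam; apply/seteqP; split => s [Ss /= Zs]; split => //=;
  have := hd _ (sZ.2 s Ss); rewrite ler_normr => /orP[]; lra.
Qed.

Lemma cvg_sum_seq0 (I : eqType) (u : nat -> I -> R) (l : seq I) :
  (forall a, a \in l -> (fun k => u k a) @ \oo --> 0) ->
  (fun k => \sum_(a <- l) u k a) @ \oo --> 0.
Proof.
elim: l => [|a l IH] H; first by under eq_fun do rewrite big_nil; exact: cvg_cst.
under eq_fun do rewrite big_cons.
have ua : (fun k => u k a) @ \oo --> 0 by apply: H; rewrite in_cons eqxx.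
have ul : (fun k => \sum_(b <- l) u k b) @ \oo --> 0.
  by apply: IH => b bl; apply: H; rewrite in_cons bl orbT.
by have := cvgD ua ul; rewrite addr0 => h; exact: h.
Qed.

Lemma cvg_dist0 (u : nat -> R) (c : R) : u @ \oo --> c ->
  (fun k => `|u k - c|) @ \oo --> 0.
Proof. by move=> uc; apply/norm_cvg0P/subr_cvg0. Qed.

Section Deviation.
Variables (Z W : R -> R) (lZ lW : seq R).
Hypotheses (sZ : simple Z lZ) (sW : simple W lW).
Hypotheses (mZ : nondecreasing_on_S Z) (mW : nondecreasing_on_S W).

Lemma lam_deviation_fiber_le (a eta eps : R) : 0 < eta -> eta < eps ->
  lam (S `&` [set s | Z s = a /\ eps <= `|W s - Z s|]) <=
  `|cdf W (a - eta) - cdf Z (a - eta)| + `|cdf W (a + eta) - cdf Z (a + eta)|.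
Proof.
move=> eta0 etaeps.
have mI x y : measurable (S `&` `[x, y]).
  by apply: measurableI; [exact: measurable_S | exact: measurable_itv].
set I1 := S `&` `[cdf Z (a - eta), cdf W (a - eta)].
set I2 := S `&` `[cdf W (a + eta), cdf Z (a + eta)].
have dev_sub : S `&` [set s | Z s = a /\ eps <= `|W s - Z s|] `<=` I1 `|` I2.
  move=> s [Ss [Za]]; rewrite ler_normr => /orP[] dev; [right|left];
    split => //=; rewrite in_itv /=; apply/andP; split.
  - by apply: nondecreasing_cdf_le sW mW _ _ Ss _; lra.
  - by apply: nondecreasing_cdf_ge sZ mZ _ _ Ss _; lra.
  - by apply: nondecreasing_cdf_le sZ mZ _ _ Ss _; lra.
  - by apply: nondecreasing_cdf_ge sW mW _ _ Ss _; lra.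
have mdev : measurable (S `&` [set s | Z s = a /\ eps <= `|W s - Z s|]).
  exact: (measurable_simple_rel (fun x y => x = a /\ eps <= `|y - x|) sZ sW).
have IS : I1 `|` I2 `<=` S by move=> s [] [].
have lam_dev := le_lam mdev (measurableU _ _ (mI _ _) (mI _ _)) IS dev_sub.
have lamI : lam (I1 `|` I2) <= lam I1 + lam I2 :=
  lam_setU_le (mI _ _) (mI _ _) (@subIsetl _ _ _) (@subIsetl _ _ _).
apply: le_trans lam_dev (le_trans lamI _).
apply: lerD; last rewrite distrC;
  exact: lam_sub_itv (mI _ _) (@subIsetl _ _ _) (@subIsetr _ _ _).
Qed.

End Deviation.

Lemma cvg_in_probability_nondecreasing (Wk : nat -> R -> R) (lk : nat -> seq R)
    (Z : R -> R) (l : seq R) :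
  (forall k, simple (Wk k) (lk k)) -> (forall k, nondecreasing_on_S (Wk k)) ->
  simple Z l -> nondecreasing_on_S Z ->
  cvg_in_distribution Wk Z -> cvg_in_probability Wk Z.
Proof.
move=> sk mk sZ mZ hd eps eps0.
(* eta avoids the differences of values, so that every a +- eta with a a value
   of Z is a continuity point of cdf Z. *)
have [eta [eta0 etae etaD]] := exists_pos_notin [seq b - a | a <- l, b <- l]
  (divr_gt0 eps0 (ltr0n _ 2)).
have etaeps : eta < eps by apply: le_lt_trans etae _; lra.
have cont a : a \in l ->
    {for a - eta, continuous (cdf Z)} /\ {for a + eta, continuous (cdf Z)}.
  move=> al; split; apply: cdf_continuous_notin sZ _; apply: contra etaD => bl;
    apply/allpairsP.
  - by exists (a - eta, a); rewrite al bl /= opprB addrC subrK.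
  - by exists (a, a + eta); rewrite al bl /= addrC addKr.
pose f k a := `|cdf (Wk k) (a - eta) - cdf Z (a - eta)| +
  `|cdf (Wk k) (a + eta) - cdf Z (a + eta)|.
apply: (@squeeze_cvgr _ _ _ _ (fun=> 0) (fun k => \sum_(a <- l) f k a)).
- apply: nearW => k; rewrite lam_ge0 /=.
  have mfib a : measurable (S `&` [set s | Z s = a /\ eps <= `|Wk k s - Z s|]).
    exact: (measurable_simple_rel (fun x y => x = a /\ eps <= `|y - x|) sZ (sk k)).
  change (lam (S `&` [set s | eps <= `|Wk k s - Z s|]) <= \sum_(a <- l) f k a).
  rewrite -(setI_values _ sZ.2) (le_trans (lam_fibers_le mfib l)) //.
  apply: ler_sum => a _.
  exact: (lam_deviation_fiber_le sZ (sk k) mZ (mk k) a eta0 etaeps).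
- exact: cvg_cst.
- apply: cvg_sum_seq0 => a /cont[cm cp]; rewrite -[0]addr0.
  by apply: cvgD; apply: cvg_dist0; exact: hd.
Qed.

End ConvergenceInProbability.

Section ContinuityInDistribution.
Variables (R : realType) (xl xh : R) (pref : (R -> R) -> (R -> R) -> Prop).
Local Notation inL := (inL xl xh).
Hypotheses (Hcomp : complete_pref xl xh pref) (Htrans : transitive_pref xl xh pref).
Hypotheses (Hcp : continuous_in_probability xl xh pref).
Hypothesis Hregret : regret_based xl xh pref.

Lemma continuous_in_distribution_of_probability :
  continuous_in_distribution xl xh pref.
Proof.
move=> Xk X Y iXk iX iY hd.
have /choice[Zk HZk] := fun k => indiff_rearrangement Hcomp Htrans Hregret (iXk k).
have [Z [iZ cZ XZ mZ]] := indiff_rearrangement Hcomp Htrans Hregret iX.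
have iZk k : inL (Zk k) by case: (HZk k).
have /choice[lk slk] : forall k, exists l, simple (Zk k) l.
  by move=> k; have [l [sl _]] := inL_simple (iZk k); exists l.
have [l [sl _]] := inL_simple iZ.
have cp : cvg_in_probability Zk Z.
  apply: (cvg_in_probability_nondecreasing slk _ sl mZ) => [k|t ct].
    by case: (HZk k).
  change ((fun k => cdf (Zk k) t) @ \oo --> cdf Z t).
  have -> : (fun k => cdf (Zk k) t) = (fun k => cdf (Xk k) t).
    by apply/funext => k; case: (HZk k) => _ ->.
  by rewrite cZ; apply: hd; rewrite -cZ.
have [cp_le cp_ge] := Hcp iZk iZ iY cp.
split => H.
- have ZY : pref Z Y.
    apply: cp_le => k; case: (HZk k) => _ _ [_ ZX] _.
    exact: Htrans (iZk k) (iXk k) iY ZX (H k).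
  by case: XZ => XZ _; exact: Htrans iX iZ iY XZ ZY.
- have YZ : pref Y Z.
    apply: cp_ge => k; case: (HZk k) => _ _ [XZk _] _.
    exact: Htrans iY (iXk k) (iZk k) (H k) XZk.
  by case: XZ => _ ZX; exact: Htrans iY iZ iX YZ ZX.
Qed.

End ContinuityInDistribution.

Unset Implicit Arguments.

Theorem corollary1 (R : realType) (xl xh : R)
    (pref : (R -> R) -> (R -> R) -> Prop) :
  complete_pref xl xh pref ->
  transitive_pref xl xh pref ->
  continuous_in_probability xl xh pref ->
  statewise_monotone xl xh pref ->
  regret_based xl xh pref ->
  (forall X Y, inL xl xh X -> inL xl xh Y ->
     strict_fosd X Y -> strict_pref pref X Y) /\
  continuous_in_distribution xl xh pref.
Proof.
move=> Hcomp Htrans Hcp Hsm Hregret; split.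
- by move=> X Y; exact: fosd_strict_pref.
- exact: continuous_in_distribution_of_probability.
Qed.
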